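(* Let $G$ be a finite group of even order which is not a $p$-group for any prime $p$. Then the co-prime graph $\Gamma_{CP}(G)$ is not minimally edge connected.
   Context: The co-prime graph $\Gamma_{CP}(G)$ of a finite group $G$ is the simple undirected graph with vertex set $G$ in which two distinct elements $x,y$ are adjacent if and only if $\gcd(o(x),o(y))=1$. A $p$-group is a group of order $p^n$ for a prime $p$. For a connected graph $\Gamma$, an edge cut-set is a set $S$ of edges such that $\Gamma-S$ is disconnected or has just one vertex, and the edge connectivity $\kappa'(\Gamma)$ is the smallest size of an edge cut-set. $\Gamma$ is minimally edge connected if $\kappa'(\Gamma-\epsilon)=\kappa'(\Gamma)-1$ for every edge $\epsilon$ of $\Gamma$. *)

From mathcomp Require Import all_boot all_order all_fingroup all_solvable.
Set Implicit Arguments. Unset Strict Implicit. Unset Printing Implicit Defensive.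

(* A simple graph on a finite vertex type T is given by its edge set
   E : {set {set T}}, each edge being a 2-element subset {x, y}. *)

Section Graphs.
Variable T : finType.

Definition adj (E : {set {set T}}) : rel T := fun x y => [set x; y] \in E.

Definition connectedb (E : {set {set T}}) : bool :=
  [forall x, forall y, connect (adj E) x y].

Definition edge_cutb (E S : {set {set T}}) : bool :=
  (S \subset E) && (~~ connectedb (E :\: S) || (#|T| <= 1)).

(* edge connectivity: the smallest size of an edge cut-set.
   (E itself is always an edge cut-set, so the default #|E| is harmless.) *)
Definition edge_conn (E : {set {set T}}) : nat :=
  \big[minn/#|E|]_(S : {set {set T}} | edge_cutb E S) #|S|.

Definition minimally_edge_connected (E : {set {set T}}) : Prop :=
  forall e, e \in E -> edge_conn (E :\ e) = edge_conn E - 1.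
End Graphs.

Definition coprime_edges (gT : finGroupType) : {set {set gT}} :=
  [set e : {set gT} | [exists x : gT, exists y : gT,
     (x != y) && (e == [set x; y]) && coprime #[x]%g #[y]%g]].

From mathcomp Require Import all_boot all_order all_fingroup all_solvable zify.
Set Implicit Arguments. Unset Strict Implicit. Unset Printing Implicit Defensive.

(* The identity of G is adjacent to every other vertex of the co-prime graph.
   In a graph with such a universal vertex u, deleting an edge {u, w} cannot
   lower the edge connectivity kappa' below min(kappa', deg w - 1): a cut of the
   smaller graph either leaves u and w connected, and is then a cut of the whole
   graph, or separates them, and then it must contain, for every other
   neighbour z of w, the edge from z to whichever of u, w lies on the other
   side.  Since kappa' is at most the minimum degree, a non-minimum-degree
   neighbour w of u gives kappa'(Gamma - {u, w}) >= kappa'(Gamma) > 0, against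
   minimality.  Such a w exists: pairing each element with its inverse shows
   that an involution t has odd degree (its neighbours are the elements of odd
   order) while an element w of odd prime order has even degree (its
   neighbours are closed under inversion and contain all elements of order at
   most 2, of which there is an even number), so deg t <> deg w. *)

Lemma geq_bigmin_seq (I : eqType) (r : seq I) (P : pred I) (F : I -> nat) x0 i :
  i \in r -> P i -> \big[minn/x0]_(j <- r | P j) F j <= F i.
Proof.
elim: r => [|j r IHr] //; rewrite inE big_cons => /predU1P[<- Pi|ri Pi].
  by rewrite Pi geq_minl.
by case: ifP => _; [apply: leq_trans (geq_minr _ _) _|]; apply: IHr.
Qed.

Section EdgeConnectivity.
Variable T : finType.
Implicit Types (E F S : {set {set T}}) (a b x y z : T).

Definition nbhd E x : {set T} := [set y | adj E x y].

Lemma eq_set2r a b x y : x != b -> [set a; x] = [set b; y] -> x = y.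
Proof.
move=> xb def_ab; have : x \in [set b; y] by rewrite -def_ab set22.
by rewrite !inE (negPf xb) => /eqP.
Qed.

Lemma adj_sym E : symmetric (adj E).
Proof. by move=> x y; rewrite /adj setUC. Qed.

Lemma connectedbE E x : connectedb E = [forall y, connect (adj E) x y].
Proof.
apply/forallP/forallP => [conn y|conn_x a]; first exact: (forallP (conn x)).
apply/forallP=> b; apply: connect_trans (conn_x b).
by rewrite (sym_connect_sym (@adj_sym E)).
Qed.

Lemma isolated_not_connect E x y :
  (forall z, ~~ adj E x z) -> y != x -> ~~ connect (adj E) x y.
Proof.
move=> isol_x yx; apply/negP => /connectP[[_ /= y_x|z p /= /andP[]]].
  by rewrite y_x eqxx in yx.
by rewrite (negPf (isol_x z)).
Qed.

Lemma edge_cutb_self E : edge_cutb E E.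
Proof.
rewrite /edge_cutb subxx /= setDv.
have [|/card_gt1P[x [y [_ _ xy]]]] := leqP #|T| 1; first by rewrite orbT.
rewrite orbF; apply/negP => /forallP/(_ x)/forallP/(_ y); apply/negP.
by apply: isolated_not_connect; rewrite 1?eq_sym // => z; rewrite /adj inE.
Qed.

Lemma edge_conn_le E S : edge_cutb E S -> edge_conn E <= #|S|.
Proof. exact: geq_bigmin_seq (mem_index_enum S). Qed.

Lemma edge_conn_ge E k : (forall S, edge_cutb E S -> k <= #|S|) -> k <= edge_conn E.
Proof.
move=> cut_ge; rewrite /edge_conn; elim/big_ind: _ => // [|m n].
  exact/cut_ge/edge_cutb_self.
by rewrite leq_min => -> ->.
Qed.

Lemma edge_conn_gt0 E : connectedb E -> 1 < #|T| -> 0 < edge_conn E.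
Proof.
move=> conn T_gt1; apply: edge_conn_ge => S /andP[_].
by rewrite leqNgt T_gt1 orbF card_gt0; apply: contraNneq => ->; rewrite setD0.
Qed.

Lemma edge_cutb_connected_edge E S a b :
  connect (adj ((E :\ [set a; b]) :\: S)) a b ->
  edge_cutb (E :\ [set a; b]) S -> edge_cutb E S.
Proof.
set F := _ :\: S => conn_ab /andP[sS].
rewrite /edge_cutb (subset_trans sS (subsetDl _ _)) /=.
apply: contraLR; rewrite !negb_or !negbK => /andP[conn ->]; rewrite andbT.
have conn_in : {in [set a; b] &, forall x y, connect (adj F) x y}.
  have symF := sym_connect_sym (@adj_sym F).
  by move=> x y; rewrite !inE => /pred2P[]-> /pred2P[]->; rewrite // symF.
apply/forallP=> x; apply/forallP=> y; apply: connect_sub (forallP (forallP conn x) y).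
move=> {}x {}y; rewrite /adj inE => /andP[xyS xyE].
have [def_xy|xy_ab] := eqVneq [set x; y] [set a; b].
  by apply: conn_in; rewrite -def_xy ?set21 ?set22.
by apply: connect1; rewrite /adj /F !inE xyS xy_ab.
Qed.

End EdgeConnectivity.

Section SimpleGraph.
Variables (T : finType) (E : {set {set T}}).
Hypothesis E_pairs : {in E, forall e, exists x y, e = [set x; y]}.
Hypothesis adj_irr : irreflexive (adj E).
Implicit Types (S : {set {set T}}) (u v w x y z : T).

Lemma edge_conn_le_nbhd v : 1 < #|T| -> edge_conn E <= #|nbhd E v|.
Proof.
move=> /card_gt1P[x [y [_ _ xy]]]; set star := [set e in E | v \in e].
have star_cut : edge_cutb E star.
  apply/andP; split; first by apply/subsetP=> e; rewrite inE => /andP[].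
  apply/orP; left; rewrite (connectedbE _ v).
  apply/forallPn; have [y' y'v] : exists y', y' != v.
    by case: (eqVneq x v) => [<-|]; [exists y; rewrite eq_sym | exists x].
  exists y'; apply: isolated_not_connect y'v => z; rewrite /adj !inE.
  by rewrite eqxx andbT andNb.
apply: leq_trans (edge_conn_le star_cut) _.
apply: leq_trans (leq_imset_card (fun z => [set v; z]) _); apply/subset_leq_card.
apply/subsetP=> e; rewrite inE => /andP[eE ve]; have [a [b def_e]] := E_pairs eE.
move: ve eE; rewrite def_e !inE => /pred2P[]-> eE.
  by apply: imset_f; rewrite inE.
by rewrite setUC; apply: imset_f; rewrite inE /adj setUC.
Qed.

Section UniversalVertex.
Variable u : T.
Hypothesis u_universal : forall z, z != u -> adj E u z.

Lemma connectedb_universal : connectedb E.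
Proof.
rewrite (connectedbE _ u); apply/forallP=> z.
by have [->|zu] := eqVneq z u; [apply: connect0 | apply/connect1/u_universal].
Qed.

Lemma card_nbhd_le_separating_cut w S : w != u ->
  S \subset E :\ [set u; w] -> ~~ connect (adj ((E :\ [set u; w]) :\: S)) u w ->
  #|nbhd E w| - 1 <= #|S|.
Proof.
set F := _ :\: S => wu sS not_conn_uw.
have nbhd_u : #|nbhd E w| - 1 <= #|nbhd E w :\ u|.
  by rewrite (cardsD1 u) leq_subLR leq_add2r leq_b1.
apply: leq_trans nbhd_u _.
have not_uw c z : z != u -> z != w -> [set c; z] != [set u; w].
  move=> zu zw; apply/eqP => def_cz; have := set22 c z.
  by rewrite def_cz !inE (negPf zu) (negPf zw).
(* z is charged to the edge from z to the endpoint of {u, w} on the other side *)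
pose g z := [set if connect (adj F) u z then w else u; z].
have nbhd_w z : z \in nbhd E w :\ u -> [/\ z != u, z != w & adj E w z].
  rewrite !inE => /andP[-> wz]; split=> //.
  by apply: contraTneq wz => ->; rewrite adj_irr.
rewrite -(card_in_imset (f := g)); last first.
  by move=> z z' /nbhd_w[zu zw _] _; apply: eq_set2r; case: ifP.
apply/subset_leq_card/subsetP=> _ /imsetP[z /nbhd_w[zu zw wz] ->].
rewrite /g; case: ifPn => conn_uz.
  apply: contraR not_conn_uw => gS; apply: connect_trans conn_uz (connect1 _).
  by rewrite /adj /F setUC !inE gS not_uw.
apply: contraR conn_uz => gS; apply: connect1.
by rewrite /adj /F !inE gS not_uw //; apply: u_universal.
Qed.

Lemma edge_conn_delete_universal_edge w : w != u ->
  minn (edge_conn E) (#|nbhd E w| - 1) <= edge_conn (E :\ [set u; w]).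
Proof.
move=> wu; apply: edge_conn_ge => S cutS.
have [conn_uw|not_conn_uw] := boolP (connect (adj ((E :\ [set u; w]) :\: S)) u w).
  exact: leq_trans (geq_minl _ _) (edge_conn_le (edge_cutb_connected_edge conn_uw cutS)).
apply: leq_trans (geq_minr _ _) (card_nbhd_le_separating_cut wu _ not_conn_uw).
by case/andP: cutS.
Qed.

Lemma not_minimally_edge_connected_universal v w : w != u ->
  #|nbhd E v| < #|nbhd E w| -> ~ minimally_edge_connected E.
Proof.
move=> wu lt_vw minE; have uwE : [set u; w] \in E by apply: u_universal.
have T_gt1 : 1 < #|T| by apply/card_gt1P; exists w, u.
have := edge_conn_delete_universal_edge wu; rewrite minE //.
have := edge_conn_le_nbhd v T_gt1; have := edge_conn_gt0 connectedb_universal T_gt1.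
lia.
Qed.

End UniversalVertex.
End SimpleGraph.

Section InvolutionParity.
Variables (T : finType) (f : T -> T).
Hypothesis fK : involutive f.

Lemma odd_card_involution (A : {set T}) : {in A, forall x, f x \in A} ->
  odd #|A| = odd #|[set x in A | f x == x]|.
Proof.
(* L picks, in each 2-cycle of f on A, the point of smaller rank *)
move=> fA; set L := [set x in A | enum_rank x < enum_rank (f x)].
have fL : f @: L = f @^-1: L by apply: can2_imset_pre.
have moved : A :\: [set x | f x == x] = L :|: f @: L.
  apply/setP=> x; rewrite fL !inE fK andbC.
  have [Ax|nAx] := boolP (x \in A); last first.
    by have /negPf-> : f x \notin A by apply: contra nAx => /fA; rewrite fK.
  rewrite fA //=; have [->|nfx] /= := eqVneq (f x) x; first by rewrite ltnn.
  by rewrite -neq_ltn (inj_eq (@ord_inj _)) (inj_eq enum_rank_inj) eq_sym nfx.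
have disjL : L :&: f @: L = set0.
  apply/setP=> x; rewrite fL !inE fK; apply/andP=> -[/andP[_ lt_x] /andP[_]].
  by rewrite ltnNge ltnW.
rewrite -(cardsID [set x | f x == x] A) moved cardsU disjL cards0 subn0.
rewrite card_imset ?addnn ?oddD ?odd_double ?addbF; last exact: can_inj fK.
by rewrite setIdE.
Qed.

End InvolutionParity.

Lemma odd_prime_dvd_not_2nat n : 0 < n -> ~~ 2.-nat n ->
  exists p, [/\ prime p, odd p & p %| n].
Proof.
rewrite /pnat => -> /allPn[p]; rewrite mem_primes => /and3P[p_pr _ p_dvd] p_not2.
exists p; split=> //.
by case: (even_prime p_pr) => [p2|//]; rewrite p2 in p_not2.
Qed.

Section CoprimeGraph.
Variable gT : finGroupType.
Local Notation E := (coprime_edges gT).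
Implicit Types (x y z : gT) (A : {set gT}).

Lemma adj_coprime_edges x y : adj E x y = (x != y) && coprime #[x]%g #[y]%g.
Proof.
apply/idP/idP => [|/andP[xy co_xy]]; last first.
  rewrite /adj inE; apply/existsP; exists x; apply/existsP; exists y.
  by rewrite xy eqxx co_xy.
rewrite /adj inE => /existsP[a /existsP[b /andP[/andP[ab /eqP def_xy] co_ab]]].
have xy : x != y.
  apply: contraNneq ab => eq_xy; have := set21 a b; have := set22 a b.
  by rewrite -def_xy eq_xy setUid !inE => /eqP-> /eqP->.
rewrite xy /=; have := set21 x y; rewrite def_xy !inE => /pred2P[] def_x.
  by rewrite def_x in xy def_xy *; rewrite (eq_set2r _ def_xy) // eq_sym.
rewrite def_x [RHS]setUC in xy def_xy *.
by rewrite coprime_sym (eq_set2r _ def_xy) // eq_sym.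
Qed.

Lemma coprime_edges_pairs : {in E, forall e, exists x y, e = [set x; y]}.
Proof.
move=> e; rewrite inE => /existsP[x /existsP[y /andP[/andP[_ /eqP->] _]]].
by exists x, y.
Qed.

Lemma adj_coprime_edges_irr : irreflexive (adj E).
Proof. by move=> x; rewrite adj_coprime_edges eqxx. Qed.

Lemma adj_coprime_edges1 z : z != 1%g -> adj E 1%g z.
Proof. by rewrite adj_coprime_edges order1 coprime1n eq_sym andbT. Qed.

Lemma invg_eq_order_dvdn2 x : (x^-1 == x)%g = (#[x]%g %| 2).
Proof. by rewrite eq_invg_mul order_dvdn expgS expg1. Qed.

Lemma odd_card_invg_closed A : {in A, forall x, x^-1 \in A}%g ->
  odd #|A| = odd #|[set x in A | #[x]%g %| 2]|.
Proof.
move=> AV; rewrite (odd_card_involution (@invgK gT)) //.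
by congr (odd _); apply: eq_card => x; rewrite !inE invg_eq_order_dvdn2.
Qed.

Lemma nbhd_coprime_edges x :
  x != 1%g -> nbhd E x = [set y | coprime #[x]%g #[y]%g].
Proof.
move=> x1; apply/setP=> y; rewrite !inE adj_coprime_edges andb_idl // => co_xy.
apply: contraNneq x1 => eq_xy.
by move: co_xy; rewrite -eq_xy /coprime gcdnn order_eq1.
Qed.

Lemma odd_nbhd_coprime_edges_involution t : #[t]%g = 2 -> odd #|nbhd E t|.
Proof.
move=> ot; rewrite nbhd_coprime_edges -?order_eq1 ?ot //.
rewrite odd_card_invg_closed => [|x]; last by rewrite !inE orderV.
rewrite (_ : [set x in _ | _] = [set 1%g]) ?cards1 //; apply/setP=> x.
rewrite !inE coprime2n; apply/andP/eqP=> [[odd_x /(@dvdn_leq _ 2 isT)]|->].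
  by move=> le_x2; apply/eqP; rewrite -order_eq1; case: #[x]%g odd_x le_x2 => [|[|[]]].
by rewrite order1.
Qed.

Lemma even_nbhd_coprime_edges_odd_order w : ~~ odd #|gT| -> w != 1%g ->
  odd #[w]%g -> ~~ odd #|nbhd E w|.
Proof.
move=> evenG w1 odd_w; rewrite nbhd_coprime_edges //.
rewrite odd_card_invg_closed => [|x]; last by rewrite !inE orderV.
rewrite (_ : [set x in _ | _] = [set x | #[x]%g %| 2]).
  have := odd_card_invg_closed (fun x (_ : x \in [set: gT]) => in_setT x^-1)%g.
  by rewrite cardsT setIdE setTI => <-.
apply/setP=> x; rewrite !inE andb_idl // => x_dvd2.
by apply: coprime_dvdr x_dvd2 _; rewrite coprimen2.
Qed.

End CoprimeGraph.

Theorem mainTheorem12 (gT : finGroupType) :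
  ~~ odd #|[set: gT]| ->
  (forall p : nat, prime p -> ~~ (p.-group [set: gT])%g) ->
  ~ minimally_edge_connected (coprime_edges gT).
Proof.
move=> evenG not_pgroup; have G_dvd2 : 2 %| #|[set: gT]%G| by rewrite dvdn2.
have [t _ ot] := Cauchy (isT : prime 2) G_dvd2.
have [p [p_pr odd_p p_dvd]] :=
  odd_prime_dvd_not_2nat (cardG_gt0 [set: gT]%G) (not_pgroup 2 isT).
have [w _ ow] := Cauchy p_pr p_dvd.
have w1 : w != 1%g by rewrite -order_eq1 ow eq_sym neq_ltn prime_gt1 ?orbT.
have t1 : t != 1%g by rewrite -order_eq1 ot.
have odd_t := odd_nbhd_coprime_edges_involution ot.
have even_w : ~~ odd #|nbhd (coprime_edges gT) w|.
  by apply: even_nbhd_coprime_edges_odd_order; rewrite -?cardsT ?ow.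
have not_min := not_minimally_edge_connected_universal (@coprime_edges_pairs gT)
  (@adj_coprime_edges_irr gT) (@adj_coprime_edges1 gT).
case: (ltngtP #|nbhd (coprime_edges gT) t| #|nbhd (coprime_edges gT) w|).
- exact: not_min w1.
- exact: not_min t1.
- by move=> eq_tw; rewrite -eq_tw odd_t in even_w.
Qed.
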